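(* Let $n\ge 2$ and let $T_n$ be the triangular grid graph. Then the boundary cycle of $T_n$ (the cycle formed by the lattice points on the three sides of the big triangle) is a $\lfloor (n-1)/2\rfloor$-supported cycle in $T_n$.
   Context: $T_n$ is the graph whose vertices are the points of the planar triangular lattice (generated by unit vectors at angle $\pi/3$) lying in a closed equilateral triangle of side length $n-1$ whose corners are lattice points (so each side contains $n$ vertices), two vertices being adjacent iff their Euclidean distance is $1$. A cycle $C$ in a graph $G$ is $k$-supported if it can be partitioned into three edge-disjoint paths $I_1,I_2,I_3$, with $I_1\cap I_2$, $I_2\cap I_3$, $I_3\cap I_1$ each a single vertex, such that for all vertices $u_i\in V(I_i)$ ($i=1,2,3$), $\max_{i,j} d_G(u_i,u_j)\ge k$, where $d_G$ is the graph distance. *)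

From mathcomp Require Import all_boot all_order all_algebra.
Set Implicit Arguments. Unset Strict Implicit. Unset Printing Implicit Defensive.
Import GRing.Theory Num.Theory.

Section Graphs.
Variables (V : finType) (adj : rel V).

Fixpoint within (m : nat) (u v : V) : bool :=
  if m is m'.+1 then within m' u v || [exists w, within m' u w && adj w v]
  else u == v.

(* graph distance d_G(u,v): the least m such that v is reachable from u by a
   walk of length m; (value #|V| if unreachable, i.e. "infinite" -- every
   finite distance is < #|V|). *)
Definition gdist (u v : V) : nat := find (fun m => within m u v) (iota 0 #|V|).

Definition is_gpath (p : seq V) : bool :=
  if p is x :: s then path adj x s && uniq p else false.

Definition path_edges (p : seq V) : {set {set V}} :=
  if p is x :: s then [set e in pairmap (fun a b => [set a; b]) x s] else set0.

Definition ksupported (E : {set {set V}}) (k : nat) : Prop :=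
  exists I1 I2 I3 : seq V,
    [/\ is_gpath I1, is_gpath I2 & is_gpath I3] /\
    [/\ path_edges I1 :|: path_edges I2 :|: path_edges I3 = E,
        [disjoint path_edges I1 & path_edges I2],
        [disjoint path_edges I2 & path_edges I3] &
        [disjoint path_edges I3 & path_edges I1]] /\
    [/\ #|[predI [mem I1] & [mem I2]]| = 1%N,
        #|[predI [mem I2] & [mem I3]]| = 1%N &
        #|[predI [mem I3] & [mem I1]]| = 1%N] /\
    (forall u1 u2 u3 : V, u1 \in I1 -> u2 \in I2 -> u3 \in I3 ->
       (k <= maxn (gdist u1 u2) (maxn (gdist u2 u3) (gdist u3 u1)))%N).

End Graphs.

(* The triangular lattice is {i*e1 + j*e2 : i j integers} with e1 e2 unit
   vectors at angle pi/3.  The closed triangle with corners 0, (n-1)e1, (n-1)e2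
   contains exactly the lattice points with i,j >= 0 and i + j <= n-1. *)
Definition TV (n : nat) := {p : 'I_n * 'I_n | (p.1 + p.2 < n)%N}.

Definition xi n (u : TV n) : int := ((val u).1 : nat)%:Z.
Definition yj n (u : TV n) : int := ((val u).2 : nat)%:Z.

(* squared Euclidean distance: |a e1 + b e2|^2 = a^2 + b^2 + a b *)
Definition sqdist n (u v : TV n) : int :=
  let a := (xi u - xi v)%R in let b := (yj u - yj v)%R in (a * a + b * b + a * b)%R.

Definition Tadj n : rel (TV n) := fun u v => sqdist u v == 1%R.

Definition side1 n (u : TV n) : bool := ((val u).2 : nat) == 0%N.
Definition side2 n (u : TV n) : bool := ((val u).1 : nat) == 0%N.
Definition side3 n (u : TV n) : bool := (((val u).1 : nat) + (val u).2 == n.-1)%N.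

Definition boundary_edges n : {set {set TV n}} :=
  [set e | [exists u, exists v, [&& e == [set u; v], Tadj u v &
      [|| side1 u && side1 v, side2 u && side2 v | side3 u && side3 v]]]].

From mathcomp Require Import all_boot all_order all_algebra.
From mathcomp Require Import zify.
Import GRing.Theory.

Set Implicit Arguments.
Unset Strict Implicit.
Unset Printing Implicit Defensive.

(* The boundary of T_n (n = m+1, lattice points (i,j) with i + j <= m) is cut
   at its three corners into its three sides, which serve as the paths I1, I2,
   I3 of the support decomposition.

   Distances are bounded below by
   1-Lipschitz potentials: if f grows by at most 1 along every edge, then
   d(u,v) >= f v - f u.

   For the triangle, adjacent vertices differ by at most 1 in each of the
   coordinates i, j and i + j.  The potential i + j gives d(u1,u2) >= m - i(u1)
   for u1 on the bottom side and u2 on the hypotenuse, and the potential i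
   gives d(u3,u1) >= i(u1) for u3 on the left side; hence the larger of the two
   distances is at least m/2 = (n-1)/2. *)

Section LipschitzDistance.
Variables (V : finType) (adj : rel V) (f : V -> nat).
Hypothesis f_lipschitz : forall x y, adj x y -> f y <= f x + 1.

Lemma within_lipschitz k u v : within adj k u v -> f v <= f u + k.
Proof.
elim: k v => [|k IHk] v /=; first by move/eqP->; rewrite addn0.
case/orP=> [/IHk|/existsP[w /andP[/IHk uw /f_lipschitz wv]]]; lia.
Qed.

(* The bound [f v - f u <= #|V|] covers the case of unreachable vertices,
   whose distance is #|V| by convention. *)
Lemma gdist_ge_lipschitz u v : f v - f u <= #|V| -> f v - f u <= gdist adj u v.
Proof.
move=> bound; rewrite /gdist; set s := iota 0 #|V|; set i := find _ s.
have [i_lt|] := ltnP i (size s); last by rewrite size_iota; lia.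
have reach : has (fun j => within adj j u v) s by rewrite has_find.
have := nth_find 0 reach; rewrite -/i nth_iota; last by rewrite size_iota in i_lt.
by move/within_lipschitz; lia.
Qed.

End LipschitzDistance.

Section Traces.
Variables (V : finType) (adj : rel V).

Definition trace (k : nat) (F : nat -> V) : seq V := [seq F t | t <- iota 0 k.+1].

Lemma pairmap_iota (T : Type) (F : nat -> V) (h : V -> V -> T) i k :
  pairmap h (F i) (map F (iota i.+1 k)) = [seq h (F t) (F t.+1) | t <- iota i k].
Proof. by elim: k i => [|k IHk] i //=; rewrite IHk. Qed.

Lemma path_map_iota (F : nat -> V) i l :
  (forall t, i <= t < i + l -> adj (F t) (F t.+1)) -> path adj (F i) (map F (iota i.+1 l)).
Proof.
elim: l i => [|l IHl] i F_adj //=; rewrite F_adj ?leqnn ?addnS ?ltnS ?leq_addr //=.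
by apply: IHl => t /andP[i_lt t_lt]; apply: F_adj; lia.
Qed.

Lemma traceP k F x : reflect (exists2 t, t <= k & x = F t) (x \in trace k F).
Proof.
apply: (iffP mapP) => [[t] | [t t_le ->]]; last by exists t; rewrite ?mem_iota.
by rewrite mem_iota => /andP[_ t_le] ->; exists t.
Qed.

Lemma path_edges_traceP k F e :
  reflect (exists2 t, t < k & e = [set F t; F t.+1]) (e \in path_edges (trace k F)).
Proof.
rewrite /trace /= pairmap_iota inE.
apply: (iffP mapP) => [[t] | [t t_lt ->]]; last by exists t; rewrite ?mem_iota.
by rewrite mem_iota => /andP[_ t_lt] ->; exists t.
Qed.

Definition edges_in (P : pred V) : {set {set V}} :=
  [set e | [exists u, exists v, [&& e == [set u; v], adj u v & P u && P v]]].

Definition parametrizes (k : nat) (F : nat -> V) (g : V -> nat) (P : pred V) :=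
  (forall t, t <= k -> P (F t) /\ g (F t) = t) /\
  (forall x, P x -> g x <= k /\ F (g x) = x).

Section Parametrized.
Variables (k : nat) (F : nat -> V) (g : V -> nat) (P : pred V).
Hypothesis paramF : parametrizes k F g P.

Lemma mem_trace x : (x \in trace k F) = P x.
Proof.
case: paramF => onP onF; apply/traceP/idP => [[t /onP[Pt _] ->] // | Px].
by have [g_le gK] := onF x Px; exists (g x).
Qed.

Lemma trace_inj s t : s <= k -> t <= k -> F s = F t -> s = t.
Proof.
case: paramF => onP _ s_le t_le Est.
by have [_ <-] := onP s s_le; have [_ <-] := onP t t_le; rewrite Est.
Qed.

Lemma uniq_trace : uniq (trace k F).
Proof.
rewrite map_inj_in_uniq ?iota_uniq // => s t.
by rewrite !mem_iota => /andP[_ s_lt] /andP[_ t_lt]; apply: trace_inj; lia.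
Qed.

Lemma gpath_trace : (forall t, t < k -> adj (F t) (F t.+1)) -> is_gpath adj (trace k F).
Proof.
move=> F_adj; have := uniq_trace; rewrite /is_gpath /trace /= => ->; rewrite andbT.
by apply: path_map_iota => t /andP[_ t_lt]; apply: F_adj.
Qed.

Lemma path_edges_trace_sub e u : e \in path_edges (trace k F) -> u \in e -> P u.
Proof.
case/path_edges_traceP=> t t_lt -> /set2P[]->; rewrite -mem_trace; apply/traceP.
- by exists t => //; apply: ltnW.
- by exists t.+1.
Qed.

Lemma trace_edge u v : P u -> P v -> u != v ->
  g v <= g u + 1 -> g u <= g v + 1 -> [set u; v] \in path_edges (trace k F).
Proof.
move=> Pu Pv neq_uv gv_le1 gu_le1; case: paramF => _ onF.
have [gu_le guK] := onF u Pu; have [gv_le gvK] := onF v Pv.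
have neq_g : g u != g v by apply: contra neq_uv => /eqP eq_g; rewrite -guK eq_g gvK.
apply/path_edges_traceP; case: ltngtP neq_g => // [lt_uv | lt_vu] _.
- by exists (g u); [lia | rewrite (_ : (g u).+1 = g v) ?guK ?gvK //; lia].
- by exists (g v); [lia | rewrite setUC (_ : (g v).+1 = g u) ?guK ?gvK //; lia].
Qed.

Lemma path_edges_traceE :
  symmetric adj -> irreflexive adj -> (forall t, t < k -> adj (F t) (F t.+1)) ->
  (forall u v, P u -> P v -> adj u v -> g v <= g u + 1) ->
  path_edges (trace k F) = edges_in P.
Proof.
move=> adj_sym adj_irr F_adj g_step; apply/setP=> e; rewrite [e \in edges_in P]inE.
apply/idP/idP.
- move=> eF; have [t t_lt e_def] := path_edges_traceP _ _ _ eF.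
  apply/existsP; exists (F t); apply/existsP; exists (F t.+1).
  rewrite -e_def eqxx F_adj //=.
  by rewrite !(path_edges_trace_sub eF) // e_def ?set21 ?set22.
- case/existsP=> u /existsP[v /and4P[/eqP-> uv Pu Pv]].
  have neq_uv : u != v by apply: contraTneq uv => ->; rewrite adj_irr.
  by apply: trace_edge; rewrite ?g_step // adj_sym.
Qed.

End Parametrized.

Section TwoTraces.
Variables (k l : nat) (F G : nat -> V) (f h : V -> nat) (P Q : pred V) (c : V).
Hypotheses (paramF : parametrizes k F f P) (paramG : parametrizes l G h Q).
Hypothesis corner : forall x, P x && Q x = (x == c).

Lemma card_trace_meet : #|[predI [mem trace k F] & [mem trace l G]]| = 1.
Proof.
rewrite (eq_card (B := pred1 c)) ?card1 // => x.
by rewrite inE /= !mem_mem (mem_trace paramF) (mem_trace paramG) corner.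
Qed.

Lemma disjoint_trace_edges :
  [disjoint path_edges (trace k F) & path_edges (trace l G)].
Proof.
apply/pred0P=> e /=; apply/negbTE/andP=> [[eF eG]].
case/path_edges_traceP: eF eG => t t_lt -> eG.
have eF : [set F t; F t.+1] \in path_edges (trace k F) by apply/path_edges_traceP; exists t.
have on_c u : u \in [set F t; F t.+1] -> u = c.
  move=> ue; apply/eqP; rewrite -corner.
  by rewrite (path_edges_trace_sub paramF eF ue) (path_edges_trace_sub paramG eG ue).
have := trace_inj paramF (ltnW t_lt) t_lt.
by rewrite (on_c _ (set21 _ _)) (on_c _ (set22 _ _)) => /(_ erefl) /n_Sn.
Qed.

End TwoTraces.

End Traces.

Section TriangularGrid.
Variable m : nat.
Local Notation V := (TV m.+1).
Local Notation adj := (@Tadj m.+1).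

Definition c1 (x : V) : nat := (val x).1.
Definition c2 (x : V) : nat := (val x).2.

Lemma coord_bound x : c1 x + c2 x <= m.
Proof. by have := valP x. Qed.

Lemma coord_inj x y : c1 x = c1 y -> c2 x = c2 y -> x = y.
Proof.
case: x y => [[a b] ?] [[c d] ?]; rewrite /c1 /c2 /= => /ord_inj eq1 /ord_inj eq2.
by apply: val_inj; rewrite /= eq1 eq2.
Qed.

(* The lattice point (i, j), meaningful when i + j <= m. *)
Definition pt (i j : nat) : V := insubd (exist _ (ord0, ord0) (ltn0Sn m)) (inord i, inord j).

Lemma pt_coord i j : i + j <= m -> c1 (pt i j) = i /\ c2 (pt i j) = j.
Proof. by move=> hij; rewrite /c1 /c2 /pt val_insubd /= !inordK ?ifT ?inordK //; lia. Qed.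

Lemma pt_coordK x : pt (c1 x) (c2 x) = x.
Proof. by have [e1 e2] := pt_coord (coord_bound x); apply: coord_inj. Qed.

Lemma Tadj_coord x y : adj x y =
  (let a := (Posz (c1 x) - Posz (c1 y))%R in let b := (Posz (c2 x) - Posz (c2 y))%R in
   a * a + b * b + a * b == 1)%R.
Proof. by []. Qed.

Lemma Tadj_sym : symmetric adj.
Proof. by move=> x y; rewrite !Tadj_coord; congr (_ == _); lia. Qed.

Lemma Tadj_irr : irreflexive adj.
Proof. by move=> x; rewrite Tadj_coord /= !subrr. Qed.

(* One step in the lattice changes i, j and i + j by at most 1:
   a^2 + b^2 + ab = 1 forces |a|, |b|, |a + b| <= 1. *)
Lemma Tadj_step x y : adj x y ->
  [/\ c1 y <= c1 x + 1, c2 y <= c2 x + 1 & c1 y + c2 y <= c1 x + c2 x + 1].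
Proof.
rewrite Tadj_coord /= => /eqP unit_len.
set a := (_ - _)%R in unit_len; set b := (_ - _)%R in unit_len.
have a_sq : (a * a <= 1)%R by nia.
have b_sq : (b * b <= 1)%R by nia.
have ab_sq : ((a + b) * (a + b) <= 1)%R by nia.
rewrite /a /b in a_sq b_sq ab_sq; split; nia.
Qed.

Definition side1_pt t := pt t 0.
Definition side3_pt t := pt (m - t) t.
Definition side2_pt t := pt 0 (m - t).

Lemma side1E x : side1 x = (c2 x == 0). Proof. by []. Qed.
Lemma side2E x : side2 x = (c1 x == 0). Proof. by []. Qed.
Lemma side3E x : side3 x = (c1 x + c2 x == m). Proof. by []. Qed.

Lemma param_side1 : parametrizes m side1_pt c1 (@side1 m.+1).
Proof.
split=> [t t_le | x /eqP x2].
  have [e1 e2] : c1 (side1_pt t) = t /\ c2 (side1_pt t) = 0 by apply: pt_coord; lia.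
  by rewrite side1E e1 e2.
split; last by rewrite /side1_pt -x2 pt_coordK.
by have := coord_bound x; lia.
Qed.

Lemma param_side3 : parametrizes m side3_pt c2 (@side3 m.+1).
Proof.
split=> [t t_le | x].
  have [e1 e2] : c1 (side3_pt t) = m - t /\ c2 (side3_pt t) = t by apply: pt_coord; lia.
  by rewrite side3E e1 e2 subnK.
rewrite side3E => /eqP x12; split; first lia.
by rewrite /side3_pt (_ : m - c2 x = c1 x) ?pt_coordK //; lia.
Qed.

Lemma param_side2 : parametrizes m side2_pt (fun x => m - c2 x) (@side2 m.+1).
Proof.
split=> [t t_le | x /eqP x1].
  have [e1 e2] : c1 (side2_pt t) = 0 /\ c2 (side2_pt t) = m - t by apply: pt_coord; lia.
  by rewrite side2E e1 e2 subKn.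
have x2_le : c2 x <= m by have := coord_bound x; lia.
by rewrite leq_subr /side2_pt subKn // -x1 pt_coordK.
Qed.

Lemma Tadj_pt i j i' j' : i + j <= m -> i' + j' <= m -> adj (pt i j) (pt i' j') =
  (let a := (Posz i - Posz i')%R in let b := (Posz j - Posz j')%R in
   a * a + b * b + a * b == 1)%R.
Proof. by move=> /pt_coord[e1 e2] /pt_coord[e1' e2']; rewrite Tadj_coord e1 e2 e1' e2'. Qed.

Lemma side1_adj t : t < m -> adj (side1_pt t) (side1_pt t.+1).
Proof. by move=> t_lt; rewrite Tadj_pt /=; nia. Qed.

Lemma side3_adj t : t < m -> adj (side3_pt t) (side3_pt t.+1).
Proof. by move=> t_lt; rewrite Tadj_pt /=; nia. Qed.

Lemma side2_adj t : t < m -> adj (side2_pt t) (side2_pt t.+1).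
Proof. by move=> t_lt; rewrite Tadj_pt /=; nia. Qed.

Lemma side1_edges : path_edges (trace m side1_pt) = edges_in adj (@side1 m.+1).
Proof.
apply: (path_edges_traceE param_side1 Tadj_sym Tadj_irr side1_adj).
by move=> u v _ _ /Tadj_step[].
Qed.

Lemma side3_edges : path_edges (trace m side3_pt) = edges_in adj (@side3 m.+1).
Proof.
apply: (path_edges_traceE param_side3 Tadj_sym Tadj_irr side3_adj).
by move=> u v _ _ /Tadj_step[].
Qed.

Lemma side2_edges : path_edges (trace m side2_pt) = edges_in adj (@side2 m.+1).
Proof.
apply: (path_edges_traceE param_side2 Tadj_sym Tadj_irr side2_adj).
by move=> u v _ _; rewrite Tadj_sym => /Tadj_step[_ vu _]; lia.
Qed.

Lemma boundary_edgesE :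
  edges_in adj (@side1 m.+1) :|: edges_in adj (@side3 m.+1) :|: edges_in adj (@side2 m.+1) =
  boundary_edges m.+1.
Proof.
apply/setP=> e; rewrite !inE; apply/idP/idP.
- case/orP=> [/orP[]|] /existsP[u /existsP[v /and3P[e_uv uv sides]]];
    by apply/existsP; exists u; apply/existsP; exists v; rewrite e_uv uv sides ?orbT.
- case/existsP=> u /existsP[v /and3P[e_uv uv sides]].
  have in_edges (P : pred V) :
      P u && P v -> [exists u, exists v, [&& e == [set u; v], adj u v & P u && P v]].
    by move=> Puv; apply/existsP; exists u; apply/existsP; exists v; rewrite e_uv uv.
  by case/or3P: sides => /in_edges ->; rewrite ?orbT.
Qed.

Lemma coord_eqE x y : (x == y) = (c1 x == c1 y) && (c2 x == c2 y).
Proof.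
by apply/eqP/andP => [->|[/eqP e1 /eqP e2]]; [split | apply: coord_inj].
Qed.

Lemma corner13 x : side1 x && side3 x = (x == pt m 0).
Proof.
have [e1 e2] : c1 (pt m 0) = m /\ c2 (pt m 0) = 0 by apply: pt_coord; lia.
by rewrite side1E side3E coord_eqE e1 e2; lia.
Qed.

Lemma corner32 x : side3 x && side2 x = (x == pt 0 m).
Proof.
have [e1 e2] : c1 (pt 0 m) = 0 /\ c2 (pt 0 m) = m by apply: pt_coord; lia.
by rewrite side3E side2E coord_eqE e1 e2; lia.
Qed.

Lemma corner21 x : side2 x && side1 x = (x == pt 0 0).
Proof.
have [e1 e2] : c1 (pt 0 0) = 0 /\ c2 (pt 0 0) = 0 by apply: pt_coord; lia.
by rewrite side2E side1E coord_eqE e1 e2; lia.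
Qed.

(* T_(m+1) has more than m vertices (already its bottom side does). *)
Lemma card_TV : m < #|{: V}|.
Proof.
rewrite cardE; apply: leq_trans (uniq_leq_size (uniq_trace param_side1) _).
  by rewrite size_map size_iota.
by move=> x _; rewrite mem_enum.
Qed.

(* Every coordinate potential is bounded by m < #|V|, so the Lipschitz bound
   applies to it. *)
Lemma gdist_ge_coord (f : V -> nat) u v :
  (forall x y, adj x y -> f y <= f x + 1) -> (forall x, f x <= m) ->
  f v - f u <= gdist adj u v.
Proof.
move=> f_lip f_le; apply: gdist_ge_lipschitz => //.
by apply: leq_trans (leq_subr _ _) (leq_trans (f_le v) (ltnW card_TV)).
Qed.

(* With u1 on the bottom side, the potential i + j separates u1 from the
   hypotenuse by m - i(u1), and the potential i separates the left side from
   u1 by i(u1). *)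
Lemma boundary_dist u1 u2 u3 : side1 u1 -> side3 u2 -> side2 u3 ->
  m <= gdist adj u1 u2 + gdist adj u3 u1.
Proof.
rewrite side1E side3E side2E => /eqP u1_2 /eqP u2_12 /eqP u3_1.
have d12 := @gdist_ge_coord (fun x => c1 x + c2 x) u1 u2
  (fun x y xy => let: And3 _ _ step := Tadj_step xy in step) coord_bound.
have d31 := @gdist_ge_coord c1 u3 u1
  (fun x y xy => let: And3 step _ _ := Tadj_step xy in step)
  (fun x => leq_trans (leq_addr _ _) (coord_bound x)).
rewrite /= in d12; lia.
Qed.

End TriangularGrid.

Lemma half_le_maxn k a b c : k <= a + c -> k./2 <= maxn a (maxn b c).
Proof. by have := odd_double_half k; lia. Qed.

Theorem mainTheorem6 (n : nat) (hn : (2 <= n)%N) :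
  ksupported (@Tadj n) (boundary_edges n) ((n - 1)./2).
Proof.
case: n hn => [|m] // _; rewrite subn1 /=.
have p1 := param_side1 m; have p3 := param_side3 m; have p2 := param_side2 m.
exists (trace m (side1_pt m)), (trace m (side3_pt m)), (trace m (side2_pt m)).
split; [|split; [|split]].
- split.
  + exact: gpath_trace p1 (@side1_adj m).
  + exact: gpath_trace p3 (@side3_adj m).
  + exact: gpath_trace p2 (@side2_adj m).
- split; first by rewrite side1_edges side3_edges side2_edges boundary_edgesE.
  + exact: disjoint_trace_edges p1 p3 (@corner13 m).
  + exact: disjoint_trace_edges p3 p2 (@corner32 m).
  + exact: disjoint_trace_edges p2 p1 (@corner21 m).
- split.
  + exact: card_trace_meet p1 p3 (@corner13 m).
  + exact: card_trace_meet p3 p2 (@corner32 m).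
  + exact: card_trace_meet p2 p1 (@corner21 m).
- move=> u1 u2 u3; rewrite (mem_trace p1) (mem_trace p3) (mem_trace p2).
  by move=> s1 s3 s2; apply: half_le_maxn (boundary_dist s1 s3 s2).
Qed.
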